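(* Let $G=(U\sqcup V,E)$ be a bipartite graph with integer weights $w:E\to\mathbb{Z}$ that has a perfect matching, let $P=(\pi,p)$ be an optimal solution of the dual assignment program $\max \sum_{u\in U}\pi(u)+\sum_{v\in V}p(v)$ subject to $\pi(u)+p(v)\le w(uv)$ for all $uv\in E$, and let $E_p\subseteq E$. Let $G_{cs}(P)$ be the spanning subgraph of $G$ with edge set $E_{cs}(P)=\{uv\in E:\pi(u)+p(v)=w(uv)\}$, and define $w_p:E_{cs}(P)\to\{0,1\}$ by $w_p(e)=0$ if $e\in E_p$ and $w_p(e)=1$ if $e\notin E_p$. If $M$ is a minimum weight perfect matching of $\{G_{cs}(P),w_p\}$, then $M$ is a minimum weight perfect matching of $\{G,w\}$ and $|M\cap E_p|\ge|M'\cap E_p|$ for every minimum weight perfect matching $M'$ of $\{G,w\}$.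
   Context: A matching is a set of pairwise vertex-disjoint edges; it is perfect if it covers all vertices. For a weight function $c$ on the edges of a graph $H$, the weight of a matching $M$ is $\sum_{e\in M}c(e)$, and a minimum weight perfect matching of $\{H,c\}$ is a perfect matching of $H$ of minimum weight. The dual assignment program is the linear-programming dual of the assignment linear program $\min\sum_{uv}x(uv)w(uv)$ subject to each vertex having total incident $x$-value $1$ and $x\ge0$. *)

From mathcomp Require Import all_boot all_order all_algebra.
Set Implicit Arguments. Unset Strict Implicit. Unset Printing Implicit Defensive.
Import Order.TTheory GRing.Theory Num.Theory.
Local Open Scope ring_scope.

(* A bipartite graph on U ⊔ V is given by its edge set F : {set U * V};
   an edge uv is the pair (u, v). *)
Section Matchings.
Variables U V : finType.

Definition is_matching (F M : {set U * V}) : Prop :=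
  M \subset F /\
  (forall e1 e2, e1 \in M -> e2 \in M -> e1 != e2 ->
     e1.1 != e2.1 /\ e1.2 != e2.2).

Definition is_perfect_matching (F M : {set U * V}) : Prop :=
  is_matching F M /\
  (forall u : U, exists v : V, (u, v) \in M) /\
  (forall v : V, exists u : U, (u, v) \in M).

Definition mweight (R : nmodType) (c : U * V -> R) (M : {set U * V}) : R :=
  \sum_(e in M) c e.

Definition is_min_weight_pm (R : numDomainType) (F : {set U * V})
    (c : U * V -> R) (M : {set U * V}) : Prop :=
  is_perfect_matching F M /\
  (forall M', is_perfect_matching F M' -> mweight c M <= mweight c M').

Definition dual_feasible (R : numDomainType) (F : {set U * V})
    (w : U * V -> int) (pi : U -> R) (p : V -> R) : Prop :=
  forall u v, (u, v) \in F -> pi u + p v <= (w (u, v))%:~R.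

Definition dual_objective (R : numDomainType) (pi : U -> R) (p : V -> R) : R :=
  \sum_(u : U) pi u + \sum_(v : V) p v.

Definition dual_optimal (R : numDomainType) (F : {set U * V})
    (w : U * V -> int) (pi : U -> R) (p : V -> R) : Prop :=
  dual_feasible F w pi p /\
  (forall pi' p', dual_feasible F w pi' p' ->
     dual_objective pi' p' <= dual_objective pi p).

Definition Ecs (R : numDomainType) (F : {set U * V})
    (w : U * V -> int) (pi : U -> R) (p : V -> R) : {set U * V} :=
  [set e in F | pi e.1 + p e.2 == (w e)%:~R].

Definition wp (Ep : {set U * V}) (e : U * V) : int :=
  if e \in Ep then 0 else 1.
End Matchings.

From mathcomp Require Import all_boot all_order all_algebra.
Set Implicit Arguments. Unset Strict Implicit.
Import Order.TTheory GRing.Theory Num.Theory.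
Local Open Scope ring_scope.

(* Summing pi(u) + p(v) over the edges of a perfect matching gives the dual
   objective, so every perfect matching weighs at least the objective of any
   feasible P, with equality exactly when all its edges are tight, i.e. lie in
   E_cs(P).  Hence the perfect matchings of G_cs(P) are precisely the minimum
   weight perfect matchings of {G, w} (the given M shows that G_cs(P) has one).
   All perfect matchings have #|U| edges, so minimising the number of edges
   outside E_p among them maximises the number of edges inside E_p. *)

Section PerfectMatchings.
Variables U V : finType.
Implicit Types F M : {set U * V}.

Lemma perfect_matching_sub F F' M :
  F \subset F' -> is_perfect_matching F M -> is_perfect_matching F' M.
Proof.
by move=> sFF' [[sMF disjM] covM]; split=> //; split=> //; apply: subset_trans sFF'.
Qed.

Lemma pm_sum_fst F M (R : nmodType) (g : U -> R) :
  is_perfect_matching F M -> \sum_(e in M) g e.1 = \sum_u g u.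
Proof.
move=> [[_ disjM] [covU _]].
have inj_fst : {in M &, injective (fun e : U * V => e.1)}.
  move=> e1 e2 M_e1 M_e2 eq12; apply/eqP/negPn/negP => ne12.
  by have [/eqP] := disjM _ _ M_e1 M_e2 ne12.
rewrite -(big_imset g inj_fst); apply: eq_bigl => u; apply/imsetP.
by have [v uvM] := covU u; exists (u, v).
Qed.

Lemma pm_sum_snd F M (R : nmodType) (g : V -> R) :
  is_perfect_matching F M -> \sum_(e in M) g e.2 = \sum_v g v.
Proof.
move=> [[_ disjM] [_ covV]].
have inj_snd : {in M &, injective (fun e : U * V => e.2)}.
  move=> e1 e2 M_e1 M_e2 eq12; apply/eqP/negPn/negP => ne12.
  by have [_ /eqP] := disjM _ _ M_e1 M_e2 ne12.
rewrite -(big_imset g inj_snd); apply: eq_bigl => v; apply/imsetP.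
by have [u uvM] := covV v; exists (u, v).
Qed.

Lemma card_pm F M : is_perfect_matching F M -> #|M| = #|U|.
Proof. by move=> pmM; have := pm_sum_fst (fun _ => 1%N) pmM; rewrite !sum1_card. Qed.

Lemma card_pm_setI F M A :
  is_perfect_matching F M -> #|M :&: A| = (#|U| - #|M :\: A|)%N.
Proof. by move=> pmM; rewrite -(card_pm pmM) -(cardsID A M) addnK. Qed.

Lemma mweight_wp A M : mweight (wp A) M = #|M :\: A|%:Z.
Proof.
rewrite /mweight /wp (big_setID A) /= big1 ?add0r; last by move=> e /setIP[_ ->].
rewrite (eq_bigr (fun _ => 1)) ?sumr_const ?natz //.
by move=> e /setDP[_ /negPf ->].
Qed.

End PerfectMatchings.

Section AssignmentDuality.
Variables (U V : finType) (R : numDomainType).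
Variables (F : {set U * V}) (w : U * V -> int) (pi : U -> R) (p : V -> R).
Hypothesis feasP : dual_feasible F w pi p.

Lemma pm_dual_objective F' M :
  is_perfect_matching F' M -> \sum_(e in M) (pi e.1 + p e.2) = dual_objective pi p.
Proof. by move=> pmM; rewrite big_split /= (pm_sum_fst pi pmM) (pm_sum_snd p pmM). Qed.

Lemma Ecs_sub : Ecs F w pi p \subset F.
Proof. by apply/subsetP => e; rewrite inE => /andP[]. Qed.

Lemma slack_ge0 e : e \in F -> 0 <= (w e)%:~R - (pi e.1 + p e.2).
Proof. by case: e => u v uvF; rewrite subr_ge0 feasP. Qed.

Lemma mweight_slack M :
  is_perfect_matching F M ->
  (mweight w M)%:~R = dual_objective pi p + \sum_(e in M) ((w e)%:~R - (pi e.1 + p e.2)).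
Proof.
by move=> pmM; rewrite sumrB (pm_dual_objective pmM) addrC subrK /mweight rmorph_sum.
Qed.

Lemma weak_duality M :
  is_perfect_matching F M -> dual_objective pi p <= (mweight w M)%:~R.
Proof.
move=> pmM; rewrite (mweight_slack pmM) lerDl sumr_ge0 // => e eM.
by apply: slack_ge0; case: pmM => [[/subsetP sMF _] _]; apply: sMF.
Qed.

Lemma mweight_Ecs M :
  is_perfect_matching (Ecs F w pi p) M -> (mweight w M)%:~R = dual_objective pi p.
Proof.
move=> pmM; rewrite /mweight rmorph_sum -(pm_dual_objective pmM).
apply: eq_bigr => e eM; case: pmM => [[/subsetP sMEcs _] _].
by move: (sMEcs e eM); rewrite inE => /andP[_ /eqP ->].
Qed.

Lemma complementary_slackness M :
  is_perfect_matching F M -> (mweight w M)%:~R = dual_objective pi p ->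
  is_perfect_matching (Ecs F w pi p) M.
Proof.
move=> pmM; have [[sMF disjM] covM] := pmM.
rewrite (mweight_slack pmM) -{2}[dual_objective _ _]addr0 => /addrI slack0.
have sM_F e : e \in M -> e \in F by apply: (subsetP sMF).
have tight := psumr_eq0P (fun e eM => slack_ge0 (sM_F e eM)) slack0.
split=> //; split=> //; apply/subsetP => e eM.
by rewrite inE sM_F //= eq_sym -subr_eq0 tight.
Qed.

Lemma min_weight_pm_Ecs M :
  is_perfect_matching (Ecs F w pi p) M -> is_min_weight_pm F w M.
Proof.
move=> pmM; split; first exact: perfect_matching_sub Ecs_sub pmM.
by move=> M' pmM'; rewrite -(ler_int R) mweight_Ecs // weak_duality.
Qed.

Lemma min_weight_pm_in_Ecs M0 M :
  is_perfect_matching (Ecs F w pi p) M0 -> is_min_weight_pm F w M ->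
  is_perfect_matching (Ecs F w pi p) M.
Proof.
move=> pmM0 [pmM minM]; apply: complementary_slackness => //.
apply/eqP; rewrite eq_le weak_duality // andbT -(mweight_Ecs pmM0) ler_int.
exact/minM/(perfect_matching_sub Ecs_sub).
Qed.

End AssignmentDuality.

Theorem proposition3p9 (U V : finType) (R : realFieldType)
    (E : {set U * V}) (w : U * V -> int) (pi : U -> R) (p : V -> R)
    (Ep M : {set U * V}) :
  (exists M0, is_perfect_matching E M0) ->
  dual_optimal E w pi p ->
  Ep \subset E ->
  is_min_weight_pm (Ecs E w pi p) (wp Ep) M ->
  is_min_weight_pm E w M /\
  (forall M', is_min_weight_pm E w M' -> #|M' :&: Ep| <= #|M :&: Ep|)%N.
Proof.
move=> _ [feasP _] _ [pmM minM].
split=> [|M' minM']; first exact: min_weight_pm_Ecs pmM.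
have pmM' := min_weight_pm_in_Ecs feasP pmM minM'.
have := minM M' pmM'; rewrite !mweight_wp lez_nat => le_out.
by rewrite (card_pm_setI _ pmM) (card_pm_setI _ pmM') leq_sub2l.
Qed.
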